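(* Let $\lambda=(n,n)$ with $n\ge1$. Then $$\xi(q)=\sum_k|S_k(\lambda)|q^k=\sum_{i=1}^{n}B(n-1,n-i)(1+q)^i=\sum_{i=1}^n\frac{i}{n}\binom{2n-i-1}{n-i}(1+q)^i,$$ where $B(\alpha,\beta)=\frac{\alpha-\beta+1}{\alpha+1}\binom{\alpha+\beta}{\alpha}$ is the ballot number.
   Context: The shape $(n,n)$ has two rows of $n$ left-justified boxes. A row-standard filling uses $1,\dots,2n$ once each with rows strictly increasing left to right. Inversion pairs of a row-standard $\tau$: for a box $c$ and $r\ge1$ let $c^{(r)}$ be the box $r$ positions to its right, if it exists. For distinct boxes $c,c'$ in the same column with $\tau(c)<\tau(c')$, let $r\ge1$ be least such that one of $c^{(r)},c'^{(r)}$ does not exist or $\tau(c^{(r)})\ne\tau(c'^{(r)})$; $(c,c')$ is an inversion pair if either (one does not exist and $c$ lies below $c'$) or (both exist and $\tau(c^{(r)})>\tau(c'^{(r)})$). $S_k(\lambda)$: row-standard fillings of shape $\lambda$ with exactly $k$ inversion pairs. *)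

From HB Require Import structures.
From mathcomp Require Import all_boot all_order all_algebra.
Set Implicit Arguments. Unset Strict Implicit. Unset Printing Implicit Defensive.
Import GRing.Theory Num.Theory.

(* Boxes of the shape (n,n): (row, column); row 0 is the top row, row 1 the
   bottom row (English convention); columns 0..n-1 left to right. *)
Definition box (n : nat) := ('I_2 * 'I_n)%type.

(* A filling of (n,n) with the numbers 1..2n: the value at box c is
   (t c).+1 where t c : 'I_(2n). *)
Definition filling (n : nat) := {ffun box n -> 'I_(2 * n)}.

Definition entry n (t : filling n) (c : box n) : nat := (t c).+1.

Definition row_standard n (t : filling n) : bool :=
  injectiveb (fun c : box n => t c) &&
  [forall c : box n, forall c' : box n,
     (c.1 == c'.1) && (c.2 < c'.2)%N ==> (entry t c < entry t c')%N].

Definition right n (c : box n) (r : nat) : option (box n) :=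
  match @insub nat (fun k => k < n)%N 'I_n (c.2 + r)%N with
  | Some j => Some (c.1, j)
  | None => None
  end.

Definition stop_at n (t : filling n) (c c' : box n) (r : nat) : bool :=
  match right c r, right c' r with
  | Some d, Some d' => entry t d != entry t d'
  | _, _ => true
  end.

(* least r >= 1 with stop_at (such r <= n always exists since c^(n) does not
   exist). *)
Definition least_r n (t : filling n) (c c' : box n) : nat :=
  (find (stop_at t c c') (iota 1 n)).+1.

Definition inv_pair n (t : filling n) (c c' : box n) : bool :=
  [&& c != c', c.2 == c'.2, (entry t c < entry t c')%N &
   match right c (least_r t c c'), right c' (least_r t c c') with
   | Some d, Some d' => (entry t d > entry t d')%N
   | _, _ => (c'.1 < c.1)%N  (* c lies below c' *)
   end].

Definition inv n (t : filling n) : nat :=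
  #|[set p : box n * box n | inv_pair t p.1 p.2]|.

Definition S (n k : nat) : {set filling n} :=
  [set t : filling n | row_standard t && (inv t == k)].

Definition ballot (a b : nat) : rat :=
  ((a%:Z - b%:Z + 1)%:~R / (a.+1)%:R) * ('C(a + b, a))%:R.

(* Record which of the values 1..2n of a row-standard filling of (n,n) lie in
   the bottom row: this is a bijection onto the words with n letters [false]
   (top) and n letters [true] (bottom), and column j pairs the j-th [false] with
   the j-th [true].  Inversion pairs lie in a single column and, the entries
   being distinct, are decided by the next column; so a column contributes one
   inversion exactly when it is "bottom first" and its right neighbour is not,
   or vice versa (a virtual last column being "top first").  Columns of the same
   excursion of the word, read as a lattice path, have the same type, hence the
   inversion number counts type changes between consecutive excursions.  A word
   with i excursions whose types are free contributes (1 + q)^i in total, and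
   the Dyck paths with i returns are counted by the ballot number
   B(n-1, n-i).  Formally, the generating polynomial is computed for all words
   with a letters [false] and b letters [true] by recursion on the first
   letter, in closed form through nat ballot numbers and the even and odd parts
   of (1 + X)^j. *)

From Pilot Require Import Defs.
From HB Require Import structures.
From mathcomp Require Import all_boot all_order all_algebra.
From mathcomp Require Import zify ring.
Set Implicit Arguments. Unset Strict Implicit. Unset Printing Implicit Defensive.
Import GRing.Theory Num.Theory.
Import Defs.

(** * Words and their flip statistic *)

Definition ntop (w : seq bool) : nat := count negb w.
Definition nbot (w : seq bool) : nat := count id w.

Lemma ntop_cons x w : ntop (x :: w) = ~~ x + ntop w. Proof. by []. Qed.
Lemma nbot_cons x w : nbot (x :: w) = x + nbot w. Proof. by []. Qed.

Lemma size_ntop_nbot w : size w = ntop w + nbot w.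
Proof. by elim: w => [|[] w IH] //=; rewrite IH ?addnS. Qed.

Fixpoint words (a : nat) : nat -> seq (seq bool) :=
  fix words_a b :=
    (if a is a'.+1 then map (cons false) (words a' b)
     else if b is 0 then [:: [::]] else [::]) ++
    (if b is b'.+1 then map (cons true) (words_a b') else [::]).

Lemma wordsE a b : words a b =
  (if a is a'.+1 then map (cons false) (words a' b)
   else if b is 0 then [:: [::]] else [::]) ++
  (if b is b'.+1 then map (cons true) (words a b') else [::]).
Proof. by case: a; case: b. Qed.

Lemma words_succ a b :
  words a.+1 b.+1 = map (cons false) (words a b.+1) ++ map (cons true) (words a.+1 b).
Proof. exact: wordsE. Qed.

Lemma cons_mem_map_cons (x y : bool) w L :
  (y :: w \in map (cons x) L) = (y == x) && (w \in L).
Proof. by apply/mapP/andP => [[w' w'_in [-> ->]] // | [/eqP -> w_in]]; exists w. Qed.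

Lemma nil_mem_map_cons (x : bool) L : ([::] \in map (cons x) L) = false.
Proof. by apply/mapP => -[]. Qed.

Lemma mem_words a b w : (w \in words a b) = (ntop w == a) && (nbot w == b).
Proof.
elim: w a b => [|x w IH] a b.
  by rewrite wordsE; case: a => [|a]; case: b => [|b] //=;
    rewrite ?mem_cat ?nil_mem_map_cons.
rewrite wordsE mem_cat.
case: a => [|a]; case: b => [|b];
  rewrite ?cons_mem_map_cons ?IH ?in_nil ?orbF ?orFb //=;
  by case: x; rewrite /= ?add0n ?add1n ?eqSS ?andbF ?orbF.
Qed.

Lemma uniq_words a b : uniq (words a b).
Proof.
have cons_inj (x : bool) : injective (cons x) by move=> ? ? [].
elim: a b => [|a IHa] b; elim: b => [|b IHb] //.
- by rewrite wordsE cat0s (map_inj_uniq (cons_inj _)).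
- by rewrite wordsE cats0 (map_inj_uniq (cons_inj _)).
- rewrite wordsE cat_uniq !(map_inj_uniq (cons_inj _)) IHa IHb andbT /=.
  by apply/hasP => -[w /mapP[w1 _ ->]] /mapP[w2 _] [].
Qed.

(* Reading [w] from the right, each letter followed by a balanced suffix closes
   a block (an excursion of the lattice path); the block is [true]-first iff
   that letter is [false].  [flips w] is the type of the leftmost block and the
   number of type changes between consecutive blocks, a virtual [false]-first
   block being placed after the end of [w]. *)
Fixpoint flips (w : seq bool) : bool * nat :=
  if w is x :: w' then
    if nbot w' == ntop w' then (~~ x, (flips w').2 + (~~ x != (flips w').1))
    else flips w'
  else (false, 0).

Lemma flips_cons_balanced x w : nbot w = ntop w ->
  flips (x :: w) = (~~ x, (flips w).2 + (~~ x != (flips w).1)).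
Proof. by move=> /= ->; rewrite eqxx. Qed.

Lemma flips_cons_unbalanced x w : nbot w != ntop w -> flips (x :: w) = flips w.
Proof. by move=> /= /negbTE ->. Qed.

Lemma flips_type_unbalanced w :
  ((ntop w < nbot w)%N -> (flips w).1 = false) /\
  ((nbot w < ntop w)%N -> (flips w).1 = true).
Proof.
elim: w => [|x w [IH1 IH2]] //=.
case: ifP => /eqP bal; case: x; rewrite /= ?ntop_cons ?nbot_cons /=; split => // lt.
all: first [by exfalso; lia | by rewrite IH1 //; lia | by rewrite IH2 //; lia].
Qed.

Lemma flips_cons_words x a b w : a != b -> w \in words a b -> flips (x :: w) = flips w.
Proof.
move=> neq_ab; rewrite mem_words => /andP[/eqP ta /eqP tb].
by rewrite flips_cons_unbalanced // ta tb eq_sym.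
Qed.

Lemma flips_type_words a b w : w \in words a b ->
  ((a < b)%N -> (flips w).1 = false) /\ ((b < a)%N -> (flips w).1 = true).
Proof. by rewrite mem_words => /andP[/eqP <- /eqP <-]; apply: flips_type_unbalanced. Qed.

(** * From fillings to words *)

Fixpoint positions (b : bool) (w : seq bool) : seq nat :=
  match w with
  | [::] => [::]
  | x :: w' => (if x == b then [:: 0] else [::]) ++ map succn (positions b w')
  end.

Lemma size_positions_false w : size (positions false w) = ntop w.
Proof. by elim: w => [|x w IH] //=; case: x; rewrite /= size_map IH. Qed.
Lemma size_positions_true w : size (positions true w) = nbot w.
Proof. by elim: w => [|x w IH] //=; case: x; rewrite /= size_map IH. Qed.

Lemma mem_positions b w v : (v \in positions b w) = (v < size w) && (nth false w v == b).
Proof.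
elim: w v => [|x w IH] v //=.
rewrite mem_cat; case: v => [|v] /=.
  case: (x == b); rewrite ?inE //=; apply/mapP => -[] //.
rewrite (mem_map succn_inj) IH ltnS.
by case: (x == b).
Qed.

Lemma sorted_positions b w : sorted ltn (positions b w).
Proof.
elim: w => [|x w IH] //=.
have sorted_succ : sorted ltn (map succn (positions b w)) by rewrite sorted_map.
by case: (x == b); case: (positions b w) sorted_succ.
Qed.

(* On the columns [(top entry, bottom entry)] of a filling, [pair_flips] is the
   column analogue of [flips], with a virtual last column whose top entry is
   the smaller one. *)
Fixpoint pair_flips (l : seq (nat * nat)) : bool * nat :=
  match l with
  | [::] => (false, 0)
  | pq :: l' => ((pq.2 < pq.1), (pair_flips l').2 + ((pq.2 < pq.1) != (pair_flips l').1))
  end.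

Lemma pair_flips_succn P Q : pair_flips (zip (map succn P) (map succn Q)) = pair_flips (zip P Q).
Proof. by elim: P Q => [|p P IH] [|q Q] //=; rewrite IH ltnS. Qed.

Fixpoint matched_flips (w : seq bool) : bool * nat :=
  match w with
  | [::] => (false, 0)
  | x :: w' => if (if x then nbot w' < ntop w' else ntop w' < nbot w')
               then (x, (matched_flips w').2 + (x != (matched_flips w').1)) else matched_flips w'
  end.

Lemma pair_flips_positions w :
  pair_flips (zip (drop (ntop w - minn (ntop w) (nbot w)) (positions false w))
                  (drop (nbot w - minn (ntop w) (nbot w)) (positions true w))) =
  matched_flips w.
Proof.
elim: w => [|x w IH] //.
rewrite [matched_flips _]/= !ntop_cons !nbot_cons.
case: x; rewrite /= ?add0n ?add1n.
- case: (ltnP (nbot w) (ntop w)) => cmp.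
  + have -> : minn (ntop w) (nbot w).+1 = (nbot w).+1 by lia.
    have k_eq : minn (ntop w) (nbot w) = nbot w by lia.
    rewrite k_eq subnn drop0 in IH; rewrite subnn drop0.
    have lt_size : (ntop w - (nbot w).+1 < size (positions false w))%N.
      by rewrite size_positions_false; lia.
    rewrite -map_drop (drop_nth 0 lt_size) /=.
    have -> : (ntop w - (nbot w).+1).+1 = (ntop w - nbot w)%N by lia.
    by rewrite pair_flips_succn IH.
  + have -> : minn (ntop w) (nbot w).+1 = ntop w by lia.
    have k_eq : minn (ntop w) (nbot w) = ntop w by lia.
    rewrite k_eq subnn drop0 in IH; rewrite subnn drop0.
    have -> : ((nbot w).+1 - ntop w)%N = (nbot w - ntop w).+1 by lia.
    by rewrite /= -map_drop pair_flips_succn IH.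
- case: (ltnP (ntop w) (nbot w)) => cmp.
  + have -> : minn (ntop w).+1 (nbot w) = (ntop w).+1 by lia.
    have k_eq : minn (ntop w) (nbot w) = ntop w by lia.
    rewrite k_eq subnn drop0 in IH; rewrite subnn drop0.
    have lt_size : (nbot w - (ntop w).+1 < size (positions true w))%N.
      by rewrite size_positions_true; lia.
    rewrite -map_drop (drop_nth 0 lt_size) /=.
    have -> : (nbot w - (ntop w).+1).+1 = (nbot w - ntop w)%N by lia.
    by rewrite pair_flips_succn IH.
  + have -> : minn (ntop w).+1 (nbot w) = nbot w by lia.
    have k_eq : minn (ntop w) (nbot w) = nbot w by lia.
    rewrite k_eq subnn drop0 in IH; rewrite subnn drop0.
    have -> : ((ntop w).+1 - nbot w)%N = (ntop w - nbot w).+1 by lia.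
    by rewrite /= -map_drop pair_flips_succn IH.
Qed.

Lemma flips_matched_flips w :
  if nbot w == ntop w then matched_flips w = flips w
  else (flips w).2 = (matched_flips w).2 + ((flips w).1 != (matched_flips w).1).
Proof.
elim: w => [|x w IH] //.
rewrite [matched_flips _]/= [flips _]/= !ntop_cons !nbot_cons.
have [type_bot type_top] := flips_type_unbalanced w.
case: eqP IH => [bal|_] IH.
  rewrite bal ltnn /= IH.
  by case: x; rewrite /= ?add0n ?add1n; case: ifP => // /eqP; lia.
case: x => /=; rewrite ?add0n ?add1n.
- case: (ltnP (nbot w) (ntop w)) => cmp.
  + move: (type_top cmp) IH; case: (flips w) => s c /= -> ->.
    by case: eqP => _ //=; rewrite ?eqxx ?addn0.
  + have -> : ((nbot w).+1 == ntop w) = false by apply/eqP; lia.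
    exact: IH.
- case: (ltnP (ntop w) (nbot w)) => cmp.
  + move: (type_bot cmp) IH; case: (flips w) => s c /= -> ->.
    by case: eqP => _ //=; rewrite ?eqxx ?addn0.
  + have -> : (nbot w == (ntop w).+1) = false by apply/eqP; lia.
    exact: IH.
Qed.

Lemma pair_flips_head P Q :
  (pair_flips (zip P Q)).1 =
  if (P != [::]) && (Q != [::]) then nth 0 Q 0 < nth 0 P 0 else false.
Proof. by case: P => [|p P]; case: Q. Qed.

Lemma pair_flips_sum P Q : size P = size Q ->
  (pair_flips (zip P Q)).2 = \sum_(j < size P)
     ((nth 0 Q j < nth 0 P j) != (if j.+1 < size P then nth 0 Q j.+1 < nth 0 P j.+1 else false)).
Proof.
elim: P Q => [|p P IH] [|q Q] //=; first by rewrite big_ord0.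
move=> [eq_size].
rewrite big_ord_recl /= -IH // pair_flips_head addnC; congr (_ + _).
by case: P Q eq_size {IH} => [|p' P] [|q' Q].
Qed.

Definition row_top : 'I_2 := ord0.
Definition row_bot : 'I_2 := @Ordinal 2 1 isT.

Lemma sum_rows (F : 'I_2 -> nat) : \sum_(r < 2) F r = F row_top + F row_bot.
Proof. by rewrite big_ord_recl big_ord1; congr (_ + F _); apply: val_inj. Qed.

Lemma row_cases (r : 'I_2) : r = row_top \/ r = row_bot.
Proof. by case: r => [[|[|//]]] lt_r2; [left|right]; apply: val_inj. Qed.

Definition row_seq n (t : filling n) (r : 'I_2) : seq nat :=
  [seq val (t (r, j)) | j <- enum 'I_n].

Definition word_of n (t : filling n) : seq bool :=
  [seq v \in row_seq t row_bot | v <- iota 0 (2 * n)].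

Lemma size_row_seq n (t : filling n) r : size (row_seq t r) = n.
Proof. by rewrite size_map size_enum_ord. Qed.
Lemma nth_row_seq n (t : filling n) r (j : 'I_n) : nth 0 (row_seq t r) j = t (r, j).
Proof. by rewrite (nth_map j) ?size_enum_ord // nth_ord_enum. Qed.
Lemma size_word_of n (t : filling n) : size (word_of t) = 2 * n.
Proof. by rewrite size_map size_iota. Qed.
Lemma nth_word_of n (t : filling n) v :
  v < 2 * n -> nth false (word_of t) v = (v \in row_seq t row_bot).
Proof. by move=> lt_v; rewrite (nth_map 0) ?size_iota // nth_iota. Qed.

Section FillingToWord.
Variables (n : nat) (t : filling n).
Hypothesis t_inj : injective t.

Lemma least_r_column (r r' : 'I_2) (j : 'I_n) : r != r' -> least_r t (r, j) (r', j) = 1.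
Proof.
move=> neq_rr'; rewrite /least_r.
have n_gt0 : 0 < n by apply: leq_ltn_trans (ltn_ord j).
have -> : iota 1 n = 1 :: iota 2 n.-1 by case: (n) n_gt0.
rewrite /= /stop_at /right /=.
case: (insub _) => [k|] //=.
by rewrite ifT //; apply/eqP => -[] /val_inj /t_inj [] /eqP; rewrite (negbTE neq_rr').
Qed.

Definition col_flip (j : 'I_n) : bool :=
  let s (k : 'I_n) := t (row_bot, k) < t (row_top, k) in
  match @insub nat (fun k => k < n) 'I_n (j + 1) with
  | Some k => s j != s k
  | None => s j
  end.

Lemma inv_pair_column (r r' : 'I_2) (j : 'I_n) :
  inv_pair t (r, j) (r', j) =
  [&& r != r', t (r, j) < t (r', j) &
   match @insub nat (fun k => k < n) 'I_n (j + 1) with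
   | Some k => t (r', k) < t (r, k)
   | None => r' < r
   end].
Proof.
rewrite /inv_pair /=.
case: (eqVneq r r') => [<-|neq_rr']; first by rewrite eqxx.
rewrite least_r_column // eqxx /= /entry !ltnS /right /=.
have -> : (r, j) != (r', j) by apply: contra_neq neq_rr' => -[].
by case: (insub _) => [k|] //=; rewrite ltnS.
Qed.

Lemma inv_pair_diff_column (c c' : box n) : c.2 != c'.2 -> inv_pair t c c' = false.
Proof. by move=> neq_col; rewrite /inv_pair (negbTE neq_col) andbF. Qed.

Lemma sum_boxes (G : box n -> nat) :
  \sum_(c : box n) G c = \sum_(r < 2) \sum_(j < n) G (r, j).
Proof. by rewrite (pair_big xpredT xpredT (fun r j => G (r, j))) /=; apply: eq_bigr => -[]. Qed.

Lemma inv_col_flips : inv t = \sum_(j < n) col_flip j.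
Proof.
rewrite /inv -sum1dep_card big_mkcond /=.
rewrite -(pair_big xpredT xpredT (fun c c' => if inv_pair t c c' then 1 else 0)) /=.
rewrite sum_boxes exchange_big /=; apply: eq_bigr => j _.
have same_column r : \sum_(c' : box n) (if inv_pair t (r, j) c' then 1 else 0) =
                     \sum_(r' < 2) (if inv_pair t (r, j) (r', j) then 1 else 0).
  rewrite sum_boxes; apply: eq_bigr => r' _.
  rewrite (bigD1 j) //= big1 ?addn0 // => j' neq_j'j.
  by rewrite inv_pair_diff_column //= eq_sym.
rewrite (eq_bigr _ (fun r _ => same_column r)) sum_rows !sum_rows !inv_pair_column /=.
have top_first k : (t (row_top, k) < t (row_bot, k)) = ~~ (t (row_bot, k) < t (row_top, k)).
  rewrite -leqNgt [RHS]leq_eqVlt.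
  by have -> : (t (row_top, k) == t (row_bot, k) :> nat) = false by apply/eqP => /val_inj /t_inj.
rewrite /col_flip top_first; case: (insub _) => [k|] /=; rewrite ?top_first.
  by case: (t (row_bot, j) < t (row_top, j)); case: (t (row_bot, k) < t (row_top, k)).
by case: (t (row_bot, j) < t (row_top, j)).
Qed.

Lemma inv_pair_flips : inv t = (pair_flips (zip (row_seq t row_top) (row_seq t row_bot))).2.
Proof.
rewrite pair_flips_sum ?size_row_seq // inv_col_flips; apply: eq_bigr => j _.
rewrite !nth_row_seq /col_flip.
case: insubP => [k _ k_eq|last_col].
  have -> : j.+1 = val k by rewrite k_eq addn1.
  by rewrite ltn_ord !nth_row_seq.
have -> : (j.+1 < n) = false by rewrite -addn1; apply/negbTE.
by case: (_ < _).
Qed.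

Hypothesis t_row_incr : forall r (j j' : 'I_n), j < j' -> t (r, j) < t (r, j').

Lemma sorted_row_seq r : sorted ltn (row_seq t r).
Proof.
apply/(sortedP 0) => i; rewrite size_row_seq => lt_i1n.
have lt_in : i < n by apply: ltnW.
rewrite -[i]/(nat_of_ord (Ordinal lt_in)) nth_row_seq.
by rewrite -[i.+1]/(nat_of_ord (Ordinal lt_i1n)) nth_row_seq; apply: t_row_incr.
Qed.

Lemma filling_onto v : v < 2 * n -> exists c, val (t c) = v.
Proof.
move=> lt_v.
have card_le : #|'I_(2 * n)| <= #|{: box n}| by rewrite card_prod !card_ord.
have /codomP [c c_eq] := inj_card_onto t_inj card_le (Ordinal lt_v).
by exists c; rewrite -c_eq.
Qed.

Lemma mem_row_seq r v : (v \in row_seq t r) = [exists j, val (t (r, j)) == v].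
Proof.
apply/mapP/existsP => [[j _ ->]|[j /eqP <-]]; first by exists j.
by exists j; rewrite ?mem_enum.
Qed.

Lemma positions_bot_row : positions true (word_of t) = row_seq t row_bot.
Proof.
apply: (irr_sorted_eq ltn_trans ltnn (sorted_positions _ _) (sorted_row_seq _)) => v.
rewrite mem_positions size_word_of.
case: (ltnP v (2 * n)) => lt_v; first by rewrite nth_word_of // eqb_id.
apply/esym/negbTE; rewrite mem_row_seq; apply/existsP => -[j /eqP t_eq].
by move: (ltn_ord (t (row_bot, j))); rewrite t_eq ltnNge lt_v.
Qed.

Lemma positions_top_row : positions false (word_of t) = row_seq t row_top.
Proof.
apply: (irr_sorted_eq ltn_trans ltnn (sorted_positions _ _) (sorted_row_seq _)) => v.
rewrite mem_positions size_word_of.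
case: (ltnP v (2 * n)) => lt_v; last first.
  apply/esym/negbTE; rewrite mem_row_seq; apply/existsP => -[j /eqP t_eq].
  by move: (ltn_ord (t (row_top, j))); rewrite t_eq ltnNge lt_v.
rewrite nth_word_of // eqbF_neg /= !mem_row_seq.
have [[r j] t_eq] := filling_onto lt_v.
have in_row r' : [exists j', val (t (r', j')) == v] = (r' == r).
  apply/existsP/eqP => [[j' /eqP]|->]; last by exists j; rewrite t_eq.
  by rewrite -t_eq => /val_inj /t_inj [].
by rewrite !in_row; case: (row_cases r) => ->.
Qed.

Lemma inv_flips : inv t = (flips (word_of t)).2.
Proof.
have ntop_n : ntop (word_of t) = n.
  by rewrite -size_positions_false positions_top_row size_row_seq.
have nbot_n : nbot (word_of t) = n.
  by rewrite -size_positions_true positions_bot_row size_row_seq.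
rewrite inv_pair_flips -positions_top_row -positions_bot_row.
have := pair_flips_positions (word_of t); rewrite ntop_n nbot_n minnn subnn !drop0 => ->.
by have := flips_matched_flips (word_of t); rewrite ntop_n nbot_n eqxx => ->.
Qed.

Lemma word_of_words : word_of t \in words n n.
Proof.
rewrite mem_words -size_positions_false -size_positions_true.
by rewrite positions_top_row positions_bot_row !size_row_seq !eqxx.
Qed.

End FillingToWord.

Section WordToFilling.
Variables (n : nat) (w : seq bool).
Hypotheses (ntop_w : ntop w = n) (nbot_w : nbot w = n).

Lemma size_w2n : size w = 2 * n. Proof. by rewrite size_ntop_nbot ntop_w nbot_w; lia. Qed.
Lemma size_positions_w b : size (positions b w) = n.
Proof. by case: b; rewrite ?size_positions_true ?size_positions_false. Qed.

Definition default_value (c : box n) : 'I_(2 * n) :=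
  widen_ord (leq_pmull n (isT : 0 < 2)) c.2.

Definition filling_of : filling n :=
  [ffun c => insubd (default_value c) (nth 0 (positions (c.1 == row_bot) w) c.2)].

Lemma nth_positions_lt b (j : 'I_n) : nth 0 (positions b w) j < 2 * n.
Proof.
have lt_j : j < size (positions b w) by rewrite size_positions_w.
by have := mem_nth 0 lt_j; rewrite mem_positions size_w2n => /andP[].
Qed.

Lemma val_filling_of c : val (filling_of c) = nth 0 (positions (c.1 == row_bot) w) c.2.
Proof. by rewrite ffunE val_insubd nth_positions_lt. Qed.

Lemma row_seq_filling_of r : row_seq filling_of r = positions (r == row_bot) w.
Proof.
apply: (@eq_from_nth _ 0); first by rewrite size_row_seq size_positions_w.
move=> i; rewrite size_row_seq => lt_in.
by rewrite -[i]/(nat_of_ord (Ordinal lt_in)) nth_row_seq val_filling_of.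
Qed.

Lemma row_standard_filling_of : row_standard filling_of.
Proof.
apply/andP; split.
  apply/injectiveP => c c' /(congr1 val); rewrite !val_filling_of.
  case: c c' => [r j] [r' j'] /=.
  have uniq_pos b : uniq (positions b w).
    exact: (sorted_uniq ltn_trans ltnn (sorted_positions _ _)).
  case: (eqVneq (r == row_bot) (r' == row_bot)) => same_row.
    rewrite same_row => /eqP; rewrite nth_uniq ?size_positions_w // => /eqP eq_jj'.
    have -> : j = j' by apply: val_inj.
    by case: (row_cases r) same_row => ->; case: (row_cases r') => -> //.
  move=> eq_nth; exfalso.
  have lt_j : j < size (positions (r == row_bot) w) by rewrite size_positions_w.
  have lt_j' : j' < size (positions (r' == row_bot) w) by rewrite size_positions_w.
  have := mem_nth 0 lt_j; have := mem_nth 0 lt_j'; rewrite eq_nth !mem_positions.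
  by move=> /andP[_ /eqP ->] /andP[_ /eqP]; apply/eqP; rewrite eq_sym.
apply/forallP => -[r j]; apply/forallP => -[r' j'] /=.
apply/implyP => /andP[/eqP <- lt_jj'].
rewrite /entry ltnS !val_filling_of /=.
by apply: (sorted_ltn_nth ltn_trans 0 (sorted_positions _ _)); rewrite // inE size_positions_w.
Qed.

Lemma word_of_filling_of : word_of filling_of = w.
Proof.
rewrite /word_of row_seq_filling_of eqxx -size_w2n -[RHS](mkseq_nth false) /mkseq.
by apply/eq_in_map => v; rewrite mem_iota add0n /= mem_positions => ->; rewrite eqb_id.
Qed.

End WordToFilling.

Lemma row_standard_inj n (t : filling n) : row_standard t -> injective t.
Proof. by case/andP => /injectiveP. Qed.

Lemma row_standard_incr n (t : filling n) : row_standard t ->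
  forall r (j j' : 'I_n), j < j' -> t (r, j) < t (r, j').
Proof.
case/andP => _ /forallP incr r j j' lt_jj'.
have := incr (r, j) => /forallP /(_ (r, j')) /implyP.
by rewrite /entry ltnS eqxx lt_jj'; apply.
Qed.

Lemma word_of_inj n : {in [pred t : filling n | row_standard t] &, injective (@word_of n)}.
Proof.
move=> t t' /[!inE] std_t std_t' eq_words.
have [inj_t incr_t] := (row_standard_inj std_t, row_standard_incr std_t).
have [inj_t' incr_t'] := (row_standard_inj std_t', row_standard_incr std_t').
have bot_eq : row_seq t row_bot = row_seq t' row_bot.
  by rewrite -(positions_bot_row incr_t) eq_words (positions_bot_row incr_t').
have top_eq : row_seq t row_top = row_seq t' row_top.
  by rewrite -(positions_top_row inj_t incr_t) eq_words (positions_top_row inj_t' incr_t').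
apply/ffunP => -[r j]; apply: val_inj.
by rewrite /= -!nth_row_seq; case: (row_cases r) => ->; rewrite ?top_eq ?bot_eq.
Qed.

Lemma perm_words_image n :
  perm_eq (image (@word_of n) [pred t : filling n | row_standard t]) (words n n).
Proof.
apply: uniq_perm.
- rewrite map_inj_in_uniq ?enum_uniq // => t t'; rewrite !mem_enum; exact: word_of_inj.
- exact: uniq_words.
move=> w; apply/imageP/idP => [[t std_t ->]|].
  exact: word_of_words (row_standard_inj std_t) (row_standard_incr std_t).
rewrite mem_words => /andP[/eqP ntop_w /eqP nbot_w].
exists (filling_of n w); first exact: row_standard_filling_of.
by rewrite word_of_filling_of.
Qed.

(** * Ballot numbers *)

Fixpoint ballotn (a : nat) : nat -> nat :=
  fix ballotn_a b :=
    if b is b'.+1 then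
      if (a < b)%N then 0 else ((if a is a'.+1 then ballotn a' b else 0) + ballotn_a b')%N
    else 1.

Lemma ballotn0 a : ballotn a 0 = 1. Proof. by case: a. Qed.

Lemma ballotnS a b :
  ballotn a b.+1 = if (a < b.+1)%N then 0 else (ballotn a.-1 b.+1 + ballotn a b)%N.
Proof. by case: a. Qed.

Lemma ballotn_eq0 a b : (a < b)%N -> ballotn a b = 0.
Proof. by case: b => // b lt_ab; rewrite ballotnS lt_ab. Qed.

Local Open Scope ring_scope.

Lemma ballotE a b : ballot a b = (a%:R - b%:R + 1) / a.+1%:R * 'C(a + b, a)%:R.
Proof. by rewrite /ballot intrD intrB. Qed.

Lemma ballot_rec a b : ballot a.+1 b.+1 = ballot a b.+1 + ballot a.+1 b.
Proof.
rewrite !ballotE !addSn !addnS (binS (a + b).+1 a) natrD.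
have pascal : a.+1%:R * 'C((a + b).+1, a.+1)%:R = b.+1%:R * 'C((a + b).+1, a)%:R :> rat.
  by rewrite -!natrM mul_bin_left; congr (_ * _)%:R; lia.
have -> : 'C((a + b).+1, a.+1)%:R = b.+1%:R * 'C((a + b).+1, a)%:R / a.+1%:R :> rat.
  by rewrite -pascal mulrC mulKf // pnatr_eq0.
rewrite -[a.+2%:R]natr1 -[a.+1%:R]natr1 -[b.+1%:R]natr1.
by field; rewrite !natr1 !pnatr_eq0.
Qed.

Lemma ballot_diag_succ a : ballot a a.+1 = 0.
Proof. by rewrite ballotE -natr1 opprD addrA subrr sub0r addNr !mul0r. Qed.

Lemma ballotn_ballot a b : (b <= a.+1)%N -> (ballotn a b)%:R = ballot a b.
Proof.
elim: a b => [|a IHa] b; elim: b => [|b IHb] le_ba.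
all: try by rewrite ballotn0 ballotE addn0 binn subr0 natr1 divff ?mulr1 // pnatr_eq0.
  by rewrite (_ : b = 0%N) ?ballot_diag_succ //; lia.
rewrite ballotnS; case: ifP => lt_ab.
  by rewrite (_ : b = a.+1) ?ballot_diag_succ //; lia.
by rewrite natrD ballot_rec IHa ?IHb //; lia.
Qed.

Lemma ballot_pred_sub n i : (1 <= i <= n)%N ->
  ballot n.-1 (n - i) = i%:R / n%:R * 'C(2 * n - i - 1, n - i)%:R.
Proof.
case: n => [|n] /andP[lt0i le_in]; first by case: i lt0i le_in.
have -> : (2 * n.+1 - i - 1 = n + (n.+1 - i))%N by lia.
rewrite ballotE /= natrB // -natr1 -[in RHS](bin_sub (leq_addl n _)) addnK.
by congr (_ / _ * _); ring.
Qed.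

(** * The flip polynomial of all words with given letter counts *)

(* The monomials of [(1 + 'X) ^+ j] of odd ([s = true]) or even degree. *)
Fixpoint binom_par (s : bool) (j : nat) : {poly rat} :=
  if j is j'.+1 then binom_par s j' + 'X * binom_par (~~ s) j' else (~~ s)%:R.

Arguments binom_par : simpl never.

Lemma binom_parS s j : binom_par s j.+1 = binom_par s j + 'X * binom_par (~~ s) j.
Proof. by []. Qed.

Lemma binom_par_sum j : binom_par false j + binom_par true j = (1 + 'X) ^+ j.
Proof.
elim: j => [|j IHj]; first by rewrite /= addr0 expr0.
by rewrite !binom_parS exprS -IHj /=; ring.
Qed.

Definition flips_gf a b : {poly rat} := \sum_(w <- words a b) 'X^((flips w).2).

Definition flips_gf_type n s : {poly rat} :=
  \sum_(w <- words n n | (flips w).1 == s) 'X^((flips w).2).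

(* [m] letters of the majority kind and [l < m] of the other kind;
   [s = true] when the majority letter is [false]. *)
Definition heavy_gf s m l : {poly rat} :=
  \sum_(k < l.+1) binom_par s (l - k).+1 *+ ballotn m.-1 k.

Definition balanced_gf n s : {poly rat} :=
  \sum_(k < n.+1) binom_par s (n - k) *+ ballotn n.-1 k.

Definition flips_gf_closed a b := [/\
  (b < a)%N -> flips_gf a b = heavy_gf true a b,
  (a < b)%N -> flips_gf a b = heavy_gf false b a &
  a = b -> forall s, flips_gf_type a s = balanced_gf a s].

Lemma flips_gf_split n : flips_gf n n = flips_gf_type n false + flips_gf_type n true.
Proof.
rewrite /flips_gf (bigID (fun w => (flips w).1)) addrC /=.
by congr (_ + _); apply: eq_bigl => w; rewrite ?eqbF_neg ?eqb_id.
Qed.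

Lemma flips_gf_cons a b :
  flips_gf a b =
  (if a is a'.+1 then \sum_(w <- words a' b) 'X^((flips (false :: w)).2)
   else if b is 0 then 1 else 0) +
  (if b is b'.+1 then \sum_(w <- words a b') 'X^((flips (true :: w)).2) else 0).
Proof.
rewrite /flips_gf wordsE big_cat; congr (_ + _).
  by case: a => [|a]; rewrite ?big_map //; case: b => [|b]; rewrite ?big_seq1 ?big_nil.
by case: b => [|b]; rewrite ?big_map ?big_nil.
Qed.

Lemma sum_flips_cons_unbalanced x a b : a != b ->
  \sum_(w <- words a b) 'X^((flips (x :: w)).2) = flips_gf a b.
Proof.
move=> neq_ab; rewrite big_seq [RHS]big_seq.
by apply: eq_bigr => w w_in; rewrite (flips_cons_words _ neq_ab w_in).
Qed.

Lemma sum_flips_cons_balanced x n :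
  \sum_(w <- words n n) 'X^((flips (x :: w)).2) =
  flips_gf_type n (~~ x) + 'X * flips_gf_type n x.
Proof.
rewrite big_seq (eq_bigr (fun w => 'X^((flips w).2 + (~~ x != (flips w).1)))); last first.
  by move=> w; rewrite mem_words => /andP[/eqP ta /eqP tb]; rewrite flips_cons_balanced ?ta ?tb.
rewrite -big_seq (bigID (fun w => (flips w).1 == x)) [RHS]addrC mulr_sumr /=.
congr (_ + _).
  by apply: eq_bigr => w /eqP ->; case: x; rewrite /= addn1 exprS.
apply: eq_big => [w|w]; first by case: x; case: (flips w).1.
by case: x; case: (flips w).1 => //= _; rewrite addn0.
Qed.

Lemma flips_gf_type_succ n s :
  flips_gf_type n.+1 s = if s then flips_gf n.+1 n else flips_gf n n.+1.
Proof.
have sum_type a b x : a != b ->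
    \sum_(w <- words a b | (flips (x :: w)).1 == s) 'X^((flips (x :: w)).2) =
    \sum_(w <- words a b | (flips w).1 == s) 'X^((flips w).2) :> {poly rat}.
  move=> neq_ab; rewrite big_seq_cond [RHS]big_seq_cond.
  apply: eq_big => [w|w /andP[w_in _]]; last by rewrite (flips_cons_words _ neq_ab).
  by apply/andP/andP => -[w_in]; rewrite (flips_cons_words _ neq_ab w_in).
have sum_forced_type a b t : (forall w, w \in words a b -> (flips w).1 = t) ->
    \sum_(w <- words a b | (flips w).1 == s) 'X^((flips w).2) =
    if t == s then flips_gf a b else 0.
  move=> type_t; rewrite big_seq_cond /flips_gf big_seq; case: eqP => [<-|neq_ts].
    by apply: eq_bigl => w; case w_in: (w \in words a b); rewrite //= type_t ?eqxx.
  by rewrite big1 // => w /andP[/type_t -> /eqP].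
rewrite /flips_gf_type words_succ big_cat !big_map.
rewrite !sum_type ?(ltn_eqF (ltnSn n)) ?(gtn_eqF (ltnSn n)) //.
rewrite (sum_forced_type _ _ false) => [|w /flips_type_words []]; last by move->.
rewrite (sum_forced_type _ _ true) => [|w /flips_type_words []]; last by move=> _ ->.
by clear sum_type sum_forced_type; case: s; rewrite /= ?add0r ?addr0.
Qed.

Lemma heavy_gf_rec s m l : (l < m)%N ->
  heavy_gf s m.+1 l.+1 = heavy_gf s m l.+1 + heavy_gf s m.+1 l.
Proof.
have recl (F : nat -> {poly rat}) : \sum_(k < l.+2) F k = F 0%N + \sum_(k < l.+1) F k.+1.
  by rewrite big_ord_recl.
move=> lt_lm; rewrite /heavy_gf (recl (fun k => binom_par s (l.+1 - k).+1 *+ ballotn m k)).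
rewrite (recl (fun k => binom_par s (l.+1 - k).+1 *+ ballotn m.-1 k)) !ballotn0 -[RHS]addrA.
congr (_ + _); rewrite -big_split; apply: eq_bigr => k _ /=.
by rewrite ballotnS ifF ?mulrnDr ?subSS //; have := ltn_ord k; lia.
Qed.

Lemma balanced_gf_succ n s : balanced_gf n.+1 s = heavy_gf s n.+1 n.
Proof.
rewrite /balanced_gf big_ord_recr /= ballotn_eq0 // mulr0n addr0.
by apply: eq_bigr => k _; rewrite subSn // -ltnS.
Qed.

Lemma balanced_gf_shift n x :
  balanced_gf n (~~ x) + 'X * balanced_gf n x = heavy_gf (~~ x) n n.
Proof.
rewrite /balanced_gf mulr_sumr -big_split; apply: eq_bigr => k _ /=.
by rewrite binom_parS negbK mulrnDl mulrnAr.
Qed.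

Section FlipsGfInduction.
Variables a b : nat.
Hypothesis IH : forall a' b', (a' + b' < a + b)%N -> flips_gf_closed a' b'.

Lemma flips_gf_top_heavy : (b < a)%N -> flips_gf a b = heavy_gf true a b.
Proof.
case: a IH => [|m] // IH' lt_bm.
have false_first : \sum_(w <- words m b) 'X^((flips (false :: w)).2) = heavy_gf true m b.
  have [eq_mb|neq_mb] := eqVneq m b.
    have lt_sum : (m + m < m.+1 + b)%N by rewrite -eq_mb addSn.
    have [_ _ /(_ erefl) gf_type] := IH' m m lt_sum.
    by rewrite -eq_mb sum_flips_cons_balanced !gf_type balanced_gf_shift.
  have [top_heavy _ _] := IH' m b (ltnSn _).
  by rewrite sum_flips_cons_unbalanced // top_heavy // ltn_neqAle eq_sym neq_mb -ltnS.
rewrite flips_gf_cons false_first; case: b IH' lt_bm {false_first} => [|l] IH' lt_lm.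
  by rewrite addr0 /heavy_gf !big_ord1 !ballotn0.
have lt_sum : (m.+1 + l < m.+1 + l.+1)%N by rewrite addnS.
have [top_heavy _ _] := IH' m.+1 l lt_sum.
by rewrite heavy_gf_rec // sum_flips_cons_unbalanced ?gtn_eqF ?top_heavy // ltnW.
Qed.

Lemma flips_gf_bot_heavy : (a < b)%N -> flips_gf a b = heavy_gf false b a.
Proof.
case: b IH => [|m] // IH' lt_am.
have true_first : \sum_(w <- words a m) 'X^((flips (true :: w)).2) = heavy_gf false m a.
  have [eq_am|neq_am] := eqVneq a m.
    have lt_sum : (a + a < a + m.+1)%N by rewrite eq_am addnS.
    have [_ _ /(_ erefl) gf_type] := IH' a a lt_sum.
    by rewrite -eq_am sum_flips_cons_balanced !gf_type balanced_gf_shift.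
  have lt_sum : (a + m < a + m.+1)%N by rewrite addnS.
  have [_ bot_heavy _] := IH' a m lt_sum.
  by rewrite sum_flips_cons_unbalanced // bot_heavy // ltn_neqAle neq_am -ltnS.
rewrite flips_gf_cons true_first; case: a IH' lt_am {true_first} => [|l] IH' lt_lm.
  by rewrite add0r /heavy_gf !big_ord1 !ballotn0.
have [_ bot_heavy _] := IH' l m.+1 (ltnSn _).
have lt_l_succm : (l < m.+1)%N by apply: ltnW.
by rewrite heavy_gf_rec // sum_flips_cons_unbalanced ?ltn_eqF ?bot_heavy // addrC.
Qed.

Lemma flips_gf_balanced : a = b -> forall s, flips_gf_type a s = balanced_gf a s.
Proof.
move=> eq_ab s; case: a IH eq_ab => [|n] IH' eq_nb; rewrite -{}eq_nb in IH'.
  rewrite /flips_gf_type /balanced_gf big_ord1 (_ : words 0 0 = [:: [::]]) //.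
  by case: s; rewrite big_cons big_nil /= ?addr0 ?expr0 mulr1n.
have lt_sum : (n.+1 + n < n.+1 + n.+1)%N by rewrite addnS.
have [top_heavy _ _] := IH' n.+1 n lt_sum.
have [_ bot_heavy _] := IH' n n.+1 (ltnSn _).
by rewrite flips_gf_type_succ balanced_gf_succ; case: s; rewrite ?top_heavy ?bot_heavy.
Qed.

End FlipsGfInduction.

Lemma flips_gfP a b : flips_gf_closed a b.
Proof.
have [m lt_m] := ubnP (a + b); elim: m a b lt_m => // m IHm a b lt_m.
have IH a' b' : (a' + b' < a + b)%N -> flips_gf_closed a' b'.
  by move=> lt; apply: IHm; apply: leq_trans lt _.
by split; [apply: flips_gf_top_heavy | apply: flips_gf_bot_heavy | apply: flips_gf_balanced].
Qed.

Lemma flips_gf_balanced_words n :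
  flips_gf n n = \sum_(k < n.+1) (1 + 'X) ^+ (n - k) *+ ballotn n.-1 k.
Proof.
have [_ _ /(_ erefl) gf_type] := flips_gfP n n.
rewrite flips_gf_split !gf_type /balanced_gf -big_split /=.
by apply: eq_bigr => k _; rewrite -mulrnDl binom_par_sum.
Qed.

Lemma sum_row_standard_inv n :
  \sum_(t : filling n | row_standard t) 'X^(inv t) = flips_gf n n :> {poly rat}.
Proof.
rewrite (eq_bigr (fun t => 'X^((flips (word_of t)).2))); last first.
  by move=> t std_t; rewrite (inv_flips (row_standard_inj std_t) (row_standard_incr std_t)).
rewrite /flips_gf -(perm_big _ (perm_words_image n)) big_image.
by apply: eq_bigl => t; rewrite inE.
Qed.

Lemma inv_bound n (t : filling n) : (inv t < ((2 * n) ^ 2).+1)%N.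
Proof.
rewrite ltnS /inv; apply: leq_trans (max_card _) _.
by rewrite !card_prod !card_ord mulnn.
Qed.

Lemma sum_card_S n :
  \sum_(k < ((2 * n) ^ 2).+1) #|S n k|%:R *: 'X^k =
  \sum_(t : filling n | row_standard t) 'X^(inv t) :> {poly rat}.
Proof.
have card_S (k : 'I_((2 * n) ^ 2).+1) : #|S n k|%:R *: 'X^k =
    \sum_(t : filling n) (if row_standard t && (inv t == k) then 'X^(inv t) else 0) :> {poly rat}.
  rewrite scaler_nat -sumr_const -big_mkcond /=.
  by apply: eq_big => t; rewrite inE // => /andP[_ /eqP ->].
rewrite (eq_bigr _ (fun k _ => card_S k)) exchange_big /= [RHS]big_mkcond /=.
apply: eq_bigr => t _; case: (row_standard t) => /=; last by rewrite big1.
rewrite (bigD1 (Ordinal (inv_bound t))) //= eqxx big1 ?addr0 // => k neq_k.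
by rewrite ifF //; apply/negbTE; apply: contra neq_k => /eqP eq_k; apply/eqP/val_inj.
Qed.

Theorem mainTheorem11 (n : nat) (hn : (1 <= n)%N) :
  let xi : {poly rat} := \sum_(k < ((2 * n) ^ 2).+1) (#|S n k|)%:R *: 'X^k in
  xi = \sum_(1 <= i < n.+1) ballot n.-1 (n - i) *: (1 + 'X) ^+ i /\
  xi = \sum_(1 <= i < n.+1)
         ((i%:R / n%:R) * ('C(2 * n - i - 1, n - i))%:R) *: (1 + 'X) ^+ i.
Proof.
move=> xi.
have xi_ballot : xi = \sum_(1 <= i < n.+1) ballot n.-1 (n - i) *: (1 + 'X) ^+ i.
  rewrite /xi sum_card_S sum_row_standard_inv flips_gf_balanced_words.
  rewrite big_ord_recr /= ballotn_eq0 ?mulr0n ?addr0 ?ltn_predL // big_rev_mkord subn1.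
  apply: eq_bigr => i _; have lt_in := ltn_ord i.
  by rewrite subSS subKn ?(ltnW lt_in) // -ballotn_ballot ?scaler_nat // prednK // ltnW.
split=> //; rewrite xi_ballot; apply: eq_big_nat => i /andP[lt0i lt_in].
by rewrite ballot_pred_sub // lt0i -ltnS.
Qed.
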